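(* Let $\mathcal{R}_{\mathrm{con}}$ be the set of isomorphism classes of finite connected racks. The homomorphism of abelian groups $$\mathbb{Z}\{\mathcal{R}_{\mathrm{con}}\}\longrightarrow \mathrm{B}(\mathcal{R}),\qquad [R]\longmapsto b(R),$$ from the free abelian group with basis $\mathcal{R}_{\mathrm{con}}$ to the Burnside ring of finite racks, is an isomorphism. In other words, the elements $b(R)$, for $R$ ranging over the finite connected racks up to isomorphism, form an integral basis of $\mathrm{B}(\mathcal{R})$. In particular, the abelian group $\mathrm{B}(\mathcal{R})$ is torsion-free.
   Context: A rack is a set $R$ with a binary operation $\rhd$ such that every left multiplication $\ell_a\colon b\mapsto a\rhd b$ is a bijection and $a\rhd(b\rhd c)=(a\rhd b)\rhd(a\rhd c)$ for all $a,b,c$. Morphisms of racks are maps preserving $\rhd$. The inner automorphism group $\mathrm{Inn}(R)$ is the subgroup of the symmetric group on $R$ generated by all $\ell_a$. A rack is connected if it is non-empty and $\mathrm{Inn}(R)$ acts transitively on $R$. A subrack of $R$ is a subset $S$ with $\ell_s(S)=S$ for all $s\in S$. A decomposition of $R$ into $S$ and $T$ means that $S,T$ are disjoint subracks (possibly empty) with $S\cup T=R$. The Burnside ring of finite racks $\mathrm{B}(\mathcal{R})$ is the abelian group generated by symbols $b(R)$, one for each finite rack $R$, subject to the relations $b(R_1)=b(R_2)$ whenever $R_1\cong R_2$, and $b(R)=b(S)+b(T)$ whenever $R$ decomposes into subracks $S$ and $T$. *)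

From mathcomp Require Import all_boot all_order all_algebra.
Set Implicit Arguments. Unset Strict Implicit. Unset Printing Implicit Defensive.
Import GRing.Theory Num.Theory.
Local Open Scope ring_scope.

Definition is_rack (T : Type) (op : T -> T -> T) : Prop :=
  (forall a, bijective (op a)) /\
  (forall a b c, op a (op b c) = op (op a b) (op a c)).

(* inn_orbit op x y  <->  y = g x for some g in Inn(R), the group generated
   by the l_a : g is a finite word in the l_a and their inverses
   (z = l_a^{-1} y  iff  op a z = y). *)
Inductive inn_orbit (T : Type) (op : T -> T -> T) (x : T) : T -> Prop :=
  | inn_refl : inn_orbit op x x
  | inn_step (a y : T) : inn_orbit op x y -> inn_orbit op x (op a y)
  | inn_stepV (a y z : T) : inn_orbit op x y -> op a z = y -> inn_orbit op x z.

Definition rack_connected (T : Type) (op : T -> T -> T) : Prop :=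
  (exists x : T, True) /\ (forall x y : T, inn_orbit op x y).

Definition is_subrack (T : Type) (op : T -> T -> T) (S : T -> Prop) : Prop :=
  forall s, S s -> forall z, S z <-> (exists y, S y /\ op s y = z).

Definition decomposes (T : Type) (op : T -> T -> T) (S U : T -> Prop) : Prop :=
  [/\ is_subrack op S, is_subrack op U,
      (forall x, ~ (S x /\ U x)) & (forall x, S x \/ U x)].

Definition rack_hom (A B : Type) (opA : A -> A -> A) (opB : B -> B -> B)
  (f : A -> B) : Prop := forall a b, f (opA a b) = opB (f a) (f b).

Definition iso_onto (A B : Type) (opA : A -> A -> A) (opB : B -> B -> B)
  (S : B -> Prop) (f : A -> B) : Prop :=
  [/\ injective f, (forall y, S y <-> exists x, f x = y) & rack_hom opA opB f].

Definition frack := {n : nat & {ffun 'I_n -> {ffun 'I_n -> 'I_n}}}.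

Definition fop (R : frack) : 'I_(tag R) -> 'I_(tag R) -> 'I_(tag R) :=
  fun a b => tagged R a b.

Definition is_frack (R : frack) : Prop := is_rack (@fop R).

Definition connected_frack (R : frack) : Prop :=
  is_frack R /\ rack_connected (@fop R).

Definition frack_iso (R1 R2 : frack) : bool :=
  [exists f : {ffun 'I_(tag R1) -> 'I_(tag R2)},
    [&& injectiveb f, [forall b, [exists a, f a == b]] &
        [forall a, forall b, f (@fop R1 a b) == @fop R2 (f a) (f b)]]].

(* a formal Z-linear combination  sum_i z_i [R_i] *)
Definition fsum := seq (frack * int).

Definition coef (s : fsum) (R : frack) : int := \sum_(p <- s | p.1 == R) p.2.

Definition scale_fsum (z : int) (s : fsum) : fsum := [seq (p.1, z * p.2) | p <- s].

Definition neg_fsum (s : fsum) : fsum := scale_fsum (-1) s.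

(* the defining relations of B(R) *)
Definition generator (g : fsum) : Prop :=
  (exists R1 R2 : frack,
     [/\ is_frack R1, is_frack R2, frack_iso R1 R2 &
         g = [:: (R1, 1); (R2, -1)]])
  \/
  (exists R S U : frack,
     [/\ is_frack R, is_frack S, is_frack U,
         (exists (PS PU : 'I_(tag R) -> Prop),
            [/\ decomposes (@fop R) PS PU,
                (exists f, iso_onto (@fop S) (@fop R) PS f) &
                (exists f, iso_onto (@fop U) (@fop R) PU f)]) &
         g = [:: (R, 1); (S, -1); (U, -1)]]).

Inductive in_rel : fsum -> Prop :=
  | in_rel_nil : in_rel [::]
  | in_rel_gen (g s : fsum) (z : int) :
      generator g -> in_rel s -> in_rel (scale_fsum z g ++ s)
  | in_rel_ext (s t : fsum) :
      in_rel s -> (forall R, coef s R = coef t R) -> in_rel t.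

From mathcomp Require Import all_boot all_order all_algebra.
From mathcomp Require Import ring boolp.
Set Implicit Arguments. Unset Strict Implicit. Unset Printing Implicit Defensive.
Import GRing.Theory Num.Theory.
Local Open Scope ring_scope.

(** For a finite connected rack Q, the number of injective morphisms from Q
  into R is invariant under isomorphism and additive over decompositions of R:
  the pieces of a decomposition are unions of Inn(R)-orbits, so the image of a
  connected rack lies in a single piece.  Hence it induces a homomorphism
  B(R) -> Z, the mark of Q.  On connected racks the marks are unitriangular
  with respect to size: nothing embeds into a smaller rack and an embedding
  into a rack of the same size is an isomorphism.  So the marks detect every
  coefficient of a combination of connected racks, which gives injectivity and,
  together with surjectivity, torsion-freeness.  Surjectivity is induction on
  the size: a rack that is not connected splits into an Inn-orbit and its
  complement, and the empty rack decomposes into two copies of itself, so its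
  class vanishes. *)

(** * Formal sums and the relation subgroup *)

Lemma coef_nil R : coef [::] R = 0.
Proof. by rewrite /coef big_nil. Qed.

Lemma coef_cons p s R : coef (p :: s) R = (p.1 == R)%:R * p.2 + coef s R.
Proof. by rewrite /coef big_cons; case: eqP; rewrite ?mul1r ?mul0r ?add0r. Qed.

Lemma coef_cat s t R : coef (s ++ t) R = coef s R + coef t R.
Proof. by rewrite /coef big_cat. Qed.

Lemma coef_scale z s R : coef (scale_fsum z s) R = z * coef s R.
Proof. by rewrite /coef /scale_fsum big_map mulr_sumr. Qed.

Lemma coef_neg s R : coef (neg_fsum s) R = - coef s R.
Proof. by rewrite coef_scale mulN1r. Qed.

Lemma coef_perm s t R : perm_eq s t -> coef s R = coef t R.
Proof. exact: perm_big. Qed.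

Lemma in_rel_cat s t : in_rel s -> in_rel t -> in_rel (s ++ t).
Proof.
move=> s_rel t_rel; elim: s_rel => [|g s' z g_gen _ IH|s' t' _ IH e] //.
  by rewrite -catA; apply: in_rel_gen.
by apply: in_rel_ext IH _ => R; rewrite !coef_cat e.
Qed.

Lemma in_rel_scale z s : in_rel s -> in_rel (scale_fsum z s).
Proof.
elim=> [|g s' z' g_gen _ IH|s' t' _ IH e]; first exact: in_rel_nil.
  apply: in_rel_ext (in_rel_gen (z * z') g_gen IH) _ => R.
  rewrite coef_scale !coef_cat !coef_scale; ring.
by apply: in_rel_ext IH _ => R; rewrite !coef_scale e.
Qed.

Lemma in_rel_generator g : generator g -> in_rel g.
Proof.
move=> g_gen; apply: in_rel_ext (in_rel_gen 1 g_gen in_rel_nil) _ => R.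
by rewrite cats0 coef_scale mul1r.
Qed.

Definition fsum_eval (w : frack -> int) (s : fsum) : int := \sum_(p <- s) p.2 * w p.1.

Lemma fsum_eval_cat w s t : fsum_eval w (s ++ t) = fsum_eval w s + fsum_eval w t.
Proof. by rewrite /fsum_eval big_cat. Qed.

Lemma fsum_eval_scale w z s : fsum_eval w (scale_fsum z s) = z * fsum_eval w s.
Proof. by rewrite /fsum_eval big_map mulr_sumr; apply: eq_bigr => p _; rewrite mulrA. Qed.

Lemma fsum_eval_coef w s (u : seq frack) : uniq u -> {subset map fst s <= u} ->
  fsum_eval w s = \sum_(R <- u) coef s R * w R.
Proof.
move=> u_uniq su; rewrite /coef.
under eq_bigr do rewrite mulr_suml big_mkcond.
rewrite exchange_big /fsum_eval; apply: eq_big_seq => p ps /=.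
have pu : p.1 \in u by apply/su/map_f.
rewrite (bigD1_seq _ pu u_uniq) eqxx /= big1 ?addr0 // => R /negPf.
by rewrite eq_sym => ->.
Qed.

Lemma eq_fsum_eval w s t : (forall R, coef s R = coef t R) ->
  fsum_eval w s = fsum_eval w t.
Proof.
move=> st; pose u := undup (map fst (s ++ t)).
have sub_u r : {subset map fst r <= map fst (s ++ t)} -> {subset map fst r <= u}.
  by move=> rst x /rst; rewrite mem_undup.
rewrite !(@fsum_eval_coef w _ u) ?undup_uniq //; last 2 first.
- by apply: sub_u => x; rewrite map_cat mem_cat => ->; rewrite orbT.
- by apply: sub_u => x; rewrite map_cat mem_cat => ->.
by apply: eq_bigr => R _; rewrite st.
Qed.

Lemma fsum_eval_rel w : (forall g, generator g -> fsum_eval w g = 0) ->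
  forall s, in_rel s -> fsum_eval w s = 0.
Proof.
move=> w_gen s; elim=> [|g s' z g_gen _ IH|s' t' _ IH e].
- by rewrite /fsum_eval big_nil.
- by rewrite fsum_eval_cat fsum_eval_scale w_gen // mulr0 add0r.
- by rewrite -(eq_fsum_eval w e).
Qed.

(** * Isomorphisms, decompositions and orbits *)

Lemma frack_isoP A B :
  reflect (exists f, bijective f /\ rack_hom (@fop A) (@fop B) f) (frack_iso A B).
Proof.
apply: (iffP existsP) => [[f /and3P[/injectiveP fi /forallP fs /forallP fh]]|[f [fb fh]]].
  exists f; split; last by move=> a b; apply/eqP; have /forallP := fh a; apply.
  apply: inj_card_bij => //; rewrite -(card_codom fi); apply: subset_leq_card.
  by apply/subsetP => b _; have /existsP[a /eqP <-] := fs b; apply: codom_f.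
exists [ffun x => f x]; apply/and3P; split.
- by apply/injectiveP => x y; rewrite !ffunE; apply: bij_inj.
- by apply/forallP => b; have [g _ fg] := fb; apply/existsP; exists (g b); rewrite ffunE fg.
- by apply/forallP => a; apply/forallP => b; rewrite !ffunE fh.
Qed.

Lemma frack_iso_refl A : frack_iso A A.
Proof. by apply/frack_isoP; exists id; split => //; exists id. Qed.

Lemma frack_iso_sym A B : frack_iso A B -> frack_iso B A.
Proof.
case/frack_isoP=> f [[g gf fg] fh]; apply/frack_isoP; exists g; split; first by exists f.
by move=> a b; apply: (can_inj gf); rewrite fh !fg.
Qed.

Lemma frack_iso_trans A B C : frack_iso A B -> frack_iso B C -> frack_iso A C.
Proof.
case/frack_isoP=> f [fb fh] /frack_isoP [g [gb gh]]; apply/frack_isoP.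
by exists (g \o f); split => [|a b /=]; [exact: bij_comp | rewrite fh gh].
Qed.

Lemma decomposes_sym T (op : T -> T -> T) PS PU :
  decomposes op PS PU -> decomposes op PU PS.
Proof.
case=> sS sU dj cv; split=> // x; first by case=> Ux Sx; apply: (dj x).
by case: (cv x); [right | left].
Qed.

Lemma decomposition_closed T (op : T -> T -> T) PS PU :
  (forall a, injective (op a)) -> decomposes op PS PU ->
  forall r z, PS z -> PS (op r z).
Proof.
move=> op_inj [sS sU dj cv] r z Sz.
case: (cv r) => [Sr | Ur]; first by apply/(sS r Sr); exists z.
case: (cv (op r z)) => // /(sU r Ur) [y [Uy /op_inj yz]].
by exfalso; apply: (dj z); split; last rewrite -yz.
Qed.

Lemma decomposition_invariant T (op : T -> T -> T) PS PU :
  (forall a, injective (op a)) -> decomposes op PS PU ->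
  forall r z, PS (op r z) <-> PS z.
Proof.
move=> op_inj dec r z; split => [Srz | ]; last exact: (decomposition_closed op_inj dec).
have [_ _ dj cv] := dec; case: (cv z) => // Uz; exfalso; apply: (dj (op r z)).
by split; last exact: (decomposition_closed op_inj (decomposes_sym dec)).
Qed.

Lemma inn_orbit_invariant T (op : T -> T -> T) (P : T -> Prop) x y :
  (forall r z, P (op r z) <-> P z) -> inn_orbit op x y -> P x -> P y.
Proof.
move=> Pinv; elim=> // [a y' _ IH | a y' z _ IH az] /IH; first by move/Pinv.
by rewrite -az => /Pinv.
Qed.

Lemma rack_hom_inn_orbit A B (opA : A -> A -> A) (opB : B -> B -> B) h x y :
  rack_hom opA opB h -> inn_orbit opA x y -> inn_orbit opB (h x) (h y).
Proof.
move=> hh; elim=> [|a y' _ IH|a y' z _ IH az]; first exact: inn_refl.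
  by rewrite hh; apply: inn_step.
by apply: (inn_stepV (a := h a) IH); rewrite -az hh.
Qed.

Lemma connected_hom_piece A T (opA : A -> A -> A) (op : T -> T -> T) PS PU h x y :
  (forall a, injective (op a)) -> decomposes op PS PU ->
  rack_connected opA -> rack_hom opA op h -> PS (h x) -> PS (h y).
Proof.
move=> op_inj dec [_ conn] hh; apply: inn_orbit_invariant (rack_hom_inn_orbit hh (conn x y)).
exact: decomposition_invariant dec.
Qed.

Lemma invariant_subrack T (op : T -> T -> T) (P : T -> Prop) :
  (forall a, bijective (op a)) -> (forall r z, P (op r z) <-> P z) -> is_subrack op P.
Proof.
move=> op_bij Pinv s _ z; split => [Pz | [y [Py <-]]]; last exact/Pinv.
have [g _ gK] := op_bij s; exists (g z); rewrite gK; split => //.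
by apply/(Pinv s); rewrite gK.
Qed.

(** * Counting injective morphisms from a connected rack *)

Definition injhoms (Q R : frack) : {set {ffun 'I_(tag Q) -> 'I_(tag R)}} :=
  [set f : {ffun 'I_(tag Q) -> 'I_(tag R)} |
     injectiveb f && [forall a, forall b, f (fop a b) == fop (f a) (f b)]].

Definition ninj (Q R : frack) : nat := #|injhoms Q R|.

Lemma injhomsP Q R (f : {ffun 'I_(tag Q) -> 'I_(tag R)}) :
  reflect (injective f /\ rack_hom (@fop Q) (@fop R) f) (f \in injhoms Q R).
Proof.
rewrite inE; apply: (iffP andP) => [[/injectiveP fi /forallP fh] | [fi fh]].
  by split => // a b; apply/eqP; have /forallP := fh a; apply.
by split; [apply/injectiveP | apply/forallP => a; apply/forallP => b; rewrite fh].
Qed.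

Lemma card_injhoms_codom Q R S (f : 'I_(tag S) -> 'I_(tag R)) :
  injective f -> rack_hom (@fop S) (@fop R) f ->
  #|[set h in injhoms Q R | codom h \subset codom f]| = ninj Q S.
Proof.
move=> fi fh; pose F (g : {ffun 'I_(tag Q) -> 'I_(tag S)}) := [ffun x => f (g x)].
have Fi : injective F.
  by move=> g1 g2 /ffunP F12; apply/ffunP => x; have := F12 x; rewrite !ffunE => /fi.
rewrite /ninj -(card_imset _ Fi); apply: eq_card => h; apply/idP/imsetP.
- rewrite inE => /andP [/injhomsP [hi hh] /subsetP hf].
  pose g := [ffun y => iinv (hf _ (codom_f h y))].
  have fg y : f (g y) = h y by rewrite ffunE f_iinv.
  exists g; last by apply/ffunP => y; rewrite ffunE fg.
  apply/injhomsP; split => [a b gab | a b]; first by apply: hi; rewrite -!fg gab.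
  by apply: fi; rewrite fh !fg hh.
- case=> g /injhomsP [gi gh] ->; rewrite inE; apply/andP; split.
    by apply/injhomsP; split => a b; rewrite !ffunE; [move/fi/gi | rewrite gh fh].
  by apply/subsetP => _ /codomP [x ->]; rewrite ffunE codom_f.
Qed.

Lemma ninj_iso Q C C' : frack_iso C C' -> ninj Q C = ninj Q C'.
Proof.
case/frack_isoP=> g [g_bij gh]; rewrite -(card_injhoms_codom Q (bij_inj g_bij) gh).
apply: eq_card => h; rewrite inE andb_idr // => _; apply/subsetP => y _.
by have [g' _ gg'] := g_bij; rewrite -[y]gg' codom_f.
Qed.

Lemma ninj_self_gt0 Q : (0 < ninj Q Q)%N.
Proof.
by apply/card_gt0P; exists [ffun x => x]; apply/injhomsP; split => a b; rewrite !ffunE.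
Qed.

Lemma ninj_size_le Q C : (tag C <= tag Q)%N ->
  ninj Q C = if frack_iso Q C then ninj Q Q else 0%N.
Proof.
move=> CQ; case: ifP => [QC | notQC]; first by rewrite (ninj_iso Q QC).
apply/eqP; rewrite cards_eq0; apply: contraFT notQC => /set0Pn [f /injhomsP [fi fh]].
apply/frack_isoP.
have QC_size : #|'I_(tag Q)| = #|'I_(tag C)|.
  by apply/eqP; rewrite eqn_leq (leq_card _ fi) !card_ord.
by exists f; split => //; apply: inj_card_bij; rewrite // QC_size.
Qed.

Lemma piece_codomP (A B C : finType) (opA : A -> A -> A) (opB : B -> B -> B)
    (P P' : B -> Prop) (f : C -> B) (h : A -> B) x0 :
  (forall b, injective (opB b)) -> decomposes opB P P' -> rack_connected opA ->
  (forall y, P y <-> exists x, f x = y) -> rack_hom opA opB h ->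
  reflect (P (h x0)) (codom h \subset codom f).
Proof.
move=> op_inj dec conn fP hh; apply: (iffP subsetP) => [sub | Px0 _ /codomP [y ->]].
  by have /codomP [x ->] := sub _ (codom_f h x0); apply/fP; exists x.
by have /fP [x <-] := connected_hom_piece y op_inj dec conn hh Px0; apply: codom_f.
Qed.

Lemma ninj_decomposes Q R S U PS PU fS fU :
  is_frack R -> connected_frack Q -> decomposes (@fop R) PS PU ->
  iso_onto (@fop S) (@fop R) PS fS -> iso_onto (@fop U) (@fop R) PU fU ->
  ninj Q R = (ninj Q S + ninj Q U)%N.
Proof.
move=> [R_bij _] [_ Qconn] dec [fSi fSP fSh] [fUi fUP fUh].
have op_inj a : injective (@fop R a) by apply/bij_inj/R_bij.
have [[x0 _] _] := Qconn; have [_ _ dj cv] := dec.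
rewrite -(card_injhoms_codom Q fSi fSh) -(card_injhoms_codom Q fUi fUh).
rewrite /ninj -(cardsID [set h : {ffun _ -> _} | codom h \subset codom fS] (injhoms Q R)).
congr (_ + _)%N; apply: eq_card => h; rewrite !inE // andbC; apply: andb_id2l => h_hom.
have /injhomsP [_ hh] : h \in injhoms Q R by rewrite inE.
have PSP := piece_codomP x0 op_inj dec Qconn fSP hh.
have PUP := piece_codomP x0 op_inj (decomposes_sym dec) Qconn fUP hh.
apply/idP/idP => [/PSP notS | /PUP Ux0]; last by apply/PSP => Sx0; apply: (dj (h x0)).
by apply/PUP; case: (cv (h x0)) => // Sx0; case: notS; apply/PSP.
Qed.

Definition mark (Q C : frack) : int := (ninj Q C)%:Z.

Lemma mark_iso Q C C' : frack_iso C C' -> mark Q C = mark Q C'.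
Proof. by move=> CC'; rewrite /mark (ninj_iso _ CC'). Qed.

Lemma mark_rel Q s : connected_frack Q -> in_rel s -> fsum_eval (mark Q) s = 0.
Proof.
move=> Qc; apply: fsum_eval_rel => _ [[R1 [R2 [_ _ iso ->]]] |
  [R [S [U [Rr _ _ [PS [PU [dec [fS iS] [fU iU]]]] ->]]]]].
  by rewrite /fsum_eval !big_cons big_nil /= (mark_iso Q iso); ring.
rewrite /fsum_eval !big_cons big_nil /= /mark (ninj_decomposes Rr Qc dec iS iU) PoszD.
ring.
Qed.

(** * Unitriangularity of the marks *)

Definition class_coef (t : fsum) (R : frack) : int := \sum_(p <- t | frack_iso p.1 R) p.2.

Definition drop_class (t : fsum) (R : frack) : fsum := [seq p <- t | ~~ frack_iso p.1 R].

Lemma class_coef_scale z t R : class_coef (scale_fsum z t) R = z * class_coef t R.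
Proof. by rewrite /class_coef big_map mulr_sumr. Qed.

Lemma class_coef_iso t R R' : frack_iso R R' -> class_coef t R = class_coef t R'.
Proof.
move=> RR'; apply: eq_bigl => p; apply/idP/idP => [pR | pR'].
  exact: frack_iso_trans pR RR'.
exact: frack_iso_trans pR' (frack_iso_sym RR').
Qed.

Lemma class_coef_drop t R0 R :
  class_coef (drop_class t R0) R = if frack_iso R R0 then 0 else class_coef t R.
Proof.
rewrite /class_coef big_filter_cond; case: ifP => [RR0 | notRR0].
  rewrite big_pred0 // => p; apply/negP => /andP [/negP notpR0 pR].
  exact/notpR0/(frack_iso_trans pR RR0).
apply: eq_bigl => p; case: (boolP (frack_iso p.1 R)) => pR; rewrite ?andbF ?andbT //.
apply: contraFN notRR0 => pR0; exact: frack_iso_trans (frack_iso_sym pR) pR0.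
Qed.

Lemma size_drop_class t p0 : p0 \in t -> (size (drop_class t p0.1) < size t)%N.
Proof.
move=> p0t; rewrite size_filter.
rewrite -[in X in (_ < X)%N](count_predC (fun p => ~~ frack_iso p.1 p0.1)).
rewrite -addn1 leq_add2l -has_count; apply/hasP; exists p0 => //=.
by rewrite negbK frack_iso_refl.
Qed.

Lemma drop_class_ind (P : fsum -> Prop) :
  (forall t, (forall p0, p0 \in t -> P (drop_class t p0.1)) -> P t) -> forall t, P t.
Proof.
move=> IHP t; have [n] := ubnP (size t); elim: n t => // n IH t t_size.
by apply: IHP => p0 p0t; apply: IH; apply: leq_trans (size_drop_class p0t) _; rewrite -ltnS.
Qed.

Lemma fsum_eval_drop_class w t R0 : (forall C C', frack_iso C C' -> w C = w C') ->
  fsum_eval w t = class_coef t R0 * w R0 + fsum_eval w (drop_class t R0).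
Proof.
move=> w_iso; rewrite /fsum_eval big_filter (bigID (fun p => frack_iso p.1 R0)) /=.
by rewrite mulr_suml; congr (_ + _); apply: eq_bigr => p pR0; rewrite (w_iso _ _ pR0).
Qed.

Lemma seq_max_elem (T : eqType) (f : T -> nat) (s : seq T) : s != [::] ->
  exists2 x, x \in s & forall y, y \in s -> (f y <= f x)%N.
Proof.
elim: s => // a [_ _ | b s IH _]; first by exists a => [|y]; rewrite ?mem_seq1 // => /eqP ->.
have [x xs xmax] := IH isT.
have [ax | xa] := leqP (f a) (f x).
  by exists x => [|y]; rewrite inE ?xs ?orbT // => /orP [/eqP -> | /xmax].
exists a => [|y]; rewrite ?mem_head // inE => /orP [/eqP -> // | /xmax yx].
exact: leq_trans yx (ltnW xa).
Qed.

Lemma class_coef_max_eq0 t R0 : (forall p, p \in t -> (tag p.1 <= tag R0)%N) ->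
  fsum_eval (mark R0) t = 0 -> class_coef t R0 = 0.
Proof.
move=> R0max; rewrite (fsum_eval_drop_class t R0 (@mark_iso R0)).
rewrite [fsum_eval _ _]big1_seq ?addr0 => [|p /andP [_]]; last first.
  rewrite mem_filter => /andP [notpR0 pt]; rewrite /mark (ninj_size_le (R0max p pt)).
  by case: ifP => [/frack_iso_sym pR0 | _]; [rewrite pR0 in notpR0 | rewrite mulr0].
move/eqP; rewrite mulf_eq0 => /orP [/eqP // |].
by rewrite /mark; case: (ninj R0 R0) (ninj_self_gt0 R0).
Qed.

Lemma class_coef_eq0_marks t : {in t, forall p, connected_frack p.1} ->
  (forall Q, connected_frack Q -> fsum_eval (mark Q) t = 0) ->
  forall R, class_coef t R = 0.
Proof.
elim/drop_class_ind: t => t IH t_conn t_marks R.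
have [-> | t_nil] := eqVneq t [::]; first by rewrite /class_coef big_nil.
have [p0 p0t p0max] := seq_max_elem (fun p => tag p.1) t_nil; set R0 := p0.1.
have c0 : class_coef t R0 = 0 by apply: class_coef_max_eq0 p0max (t_marks _ (t_conn _ p0t)).
have [RR0 | notRR0] := boolP (frack_iso R R0); first by rewrite (class_coef_iso t RR0).
have -> : class_coef t R = class_coef (drop_class t R0) R.
  by rewrite class_coef_drop (negbTE notRR0).
apply: (IH p0 p0t) => [p | Q Qc]; first by rewrite mem_filter => /andP [_ /t_conn].
by rewrite -(t_marks Q Qc) (fsum_eval_drop_class t R0 (@mark_iso Q)) c0 mul0r add0r.
Qed.

Lemma iso_class_rel R0 (c : fsum) : is_frack R0 ->
  (forall p, p \in c -> is_frack p.1 /\ frack_iso p.1 R0) ->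
  in_rel (c ++ [:: (R0, - \sum_(p <- c) p.2)]).
Proof.
move=> R0r; elim: c => [_ | p c IH c_iso].
  by apply: in_rel_ext in_rel_nil _ => R; rewrite /= big_nil !coef_cons coef_nil; ring.
have [pr pR0] := c_iso p (mem_head p c).
have p_gen : generator [:: (p.1, 1); (R0, -1)] by left; exists p.1, R0.
have := in_rel_gen p.2 p_gen (IH (fun q qc => c_iso q (predU1r _ _ qc))).
move/in_rel_ext; apply => R.
by rewrite /= big_cons !(coef_cat, coef_cons, coef_scale, coef_nil) /=; ring.
Qed.

Lemma class_coef_eq0_rel t : {in t, forall p, connected_frack p.1} ->
  (forall R, connected_frack R -> class_coef t R = 0) -> in_rel t.
Proof.
elim/drop_class_ind: t => t IH t_conn t_coef.
case: t IH t_conn t_coef => [|p0 t0] IH t_conn t_coef; first exact: in_rel_nil.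
set t := p0 :: t0 in IH t_conn t_coef *; set R0 := p0.1.
have R0c : connected_frack R0 by apply/t_conn/mem_head.
have class_rel : in_rel [seq p <- t | frack_iso p.1 R0].
  have class_iso p : p \in [seq p <- t | frack_iso p.1 R0] -> is_frack p.1 /\ frack_iso p.1 R0.
    by rewrite mem_filter => /andP [pR0 /t_conn []].
  apply: in_rel_ext (iso_class_rel R0c.1 class_iso) _ => R.
  rewrite coef_cat coef_cons coef_nil big_filter -/(class_coef t R0) (t_coef R0 R0c) /=.
  by ring.
have drop_rel : in_rel (drop_class t R0).
  apply: (IH p0 (mem_head p0 t0)) => [p | R Rc].
    by rewrite mem_filter => /andP [_ /t_conn].
  by rewrite class_coef_drop t_coef //; case: ifP.
apply: in_rel_ext (in_rel_cat class_rel drop_rel) _ => R.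
exact/coef_perm/permEl/perm_filterC.
Qed.

(** * Splitting a finite rack into connected components *)

Definition mkfrack (T : finType) (op : T -> T -> T) : frack :=
  existT _ #|T| [ffun a => [ffun b => enum_rank (op (enum_val a) (enum_val b))]].

Lemma mkfrack_hom (T : finType) (op : T -> T -> T) :
  rack_hom (@fop (mkfrack op)) op enum_val.
Proof. by move=> a b; rewrite /fop /= !ffunE enum_rankK. Qed.

Lemma inj_hom_frack A B (opB : B -> B -> B) f :
  is_rack opB -> injective f -> rack_hom (@fop A) opB f -> is_frack A.
Proof.
move=> [opB_bij opB_dist] fi fh; split => [a | a b c]; last by apply: fi; rewrite !fh opB_dist.
apply: injF_bij => x y /(congr1 f); rewrite !fh => /(bij_inj (opB_bij (f a))).
exact: fi.
Qed.

Section SubFrack.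

Variables (R : frack) (P : pred 'I_(tag R)).

(* [insubd x] falls back to [x] only if [P] is not closed under [fop]. *)
Definition sub_frack : frack :=
  mkfrack (fun x y : {x | P x} => insubd x (fop (val x) (val y))).

Definition sub_frack_emb (i : 'I_(tag sub_frack)) : 'I_(tag R) := val (enum_val i).

Lemma size_sub_frack : tag sub_frack = #|P|.
Proof. by rewrite /= card_sig. Qed.

Hypothesis P_closed : forall x y, P x -> P y -> P (fop x y).

Lemma sub_frack_iso : iso_onto (@fop sub_frack) (@fop R) P sub_frack_emb.
Proof.
split => [i j /val_inj /enum_val_inj // | y | a b].
  split => [Py | [x <-]]; last exact: valP (enum_val x).
  by exists (enum_rank (exist _ y Py : {x | P x})); rewrite /sub_frack_emb enum_rankK.
by rewrite /sub_frack_emb mkfrack_hom insubdK //; apply: P_closed; apply: valP.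
Qed.

Lemma sub_frack_rack : is_frack R -> is_frack sub_frack.
Proof. by move=> Rr; have [fi _ fh] := sub_frack_iso; exact: inj_hom_frack Rr fi fh. Qed.

End SubFrack.

Lemma empty_frack_rel R : tag R = 0%N -> in_rel [:: (R, 1)].
Proof.
move=> R0; have R_empty (y : 'I_(tag R)) : False by case: y; rewrite R0.
have Rr : is_frack R by split => a; case: (R_empty a).
have emb : iso_onto (@fop R) (@fop R) (fun _ => False) id.
  by split => // y; case: (R_empty y).
have R_gen : generator [:: (R, 1); (R, -1); (R, -1)].
  right; exists R, R, R; split => //; exists (fun _ => False), (fun _ => False).
  by split; [split=> // y; case: (R_empty y) | exists id | exists id].
apply: in_rel_ext (in_rel_scale (-1) (in_rel_generator R_gen)) _ => R'.
by rewrite coef_scale !coef_cons coef_nil /=; ring.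
Qed.

Lemma invariant_split_generator R (P : pred 'I_(tag R)) :
  is_frack R -> (forall r y, P (fop r y) = P y) ->
  generator [:: (R, 1); (sub_frack P, -1); (sub_frack (predC P), -1)].
Proof.
move=> Rr Pinv; have [R_bij _] := Rr.
have P_closed x y : P x -> P y -> P (fop x y) by rewrite Pinv.
have P'_closed x y : ~~ P x -> ~~ P y -> ~~ P (fop x y) by rewrite Pinv.
right; exists R, (sub_frack P), (sub_frack (predC P)); split => //.
- exact: sub_frack_rack P_closed Rr.
- exact: sub_frack_rack P'_closed Rr.
- exists (fun y => P y), (fun y => predC P y); split.
  + split; try (apply: invariant_subrack => // r y; rewrite /= Pinv //).
      by move=> x /= [->].
    by move=> x /=; case: (P x); [left | right].
  + by eexists; apply: sub_frack_iso P_closed.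
  + by eexists; apply: sub_frack_iso P'_closed.
Qed.

Lemma frack_rel_connected R : is_frack R ->
  exists t, {in t, forall p, connected_frack p.1} /\ in_rel ((R, 1) :: neg_fsum t).
Proof.
have [n] := ubnP (tag R); elim: n R => // n IH R R_size Rr.
have [R0 | R_gt0] := posnP (tag R).
  by exists [::]; split => //; exact: empty_frack_rel.
case: (pselect (forall x y, inn_orbit (@fop R) x y)) => [conn | ].
  exists [:: (R, 1)]; split.
    move=> p; rewrite mem_seq1 => /eqP -> /=.
    by split => //; split => //; exists (Ordinal R_gt0).
  apply: in_rel_ext in_rel_nil _ => R'.
  by rewrite coef_cons coef_neg coef_cons !coef_nil /=; ring.
move=> /existsNP [x0 /existsNP [y0 not_x0y0]].
pose P y := `[< inn_orbit (@fop R) x0 y >].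
have Pinv r y : P (fop r y) = P y.
  by apply/asboolP/asboolP => [xry | xy]; [apply: inn_stepV xry erefl | apply: inn_step].
have sub_rel (Q : pred 'I_(tag R)) y : (forall r z, Q (fop r z) = Q z) -> ~~ Q y ->
    exists t, {in t, forall p, connected_frack p.1} /\ in_rel ((sub_frack Q, 1) :: neg_fsum t).
  move=> Qinv notQy; apply: IH; last by apply: sub_frack_rack Rr => a b _; rewrite Qinv.
  apply: (@leq_trans (tag R)); last by rewrite -ltnS.
  rewrite size_sub_frack -[in X in (_ < X)%N](card_ord (tag R)).
  by rewrite -(cardC Q) -addn1 leq_add2l; apply/card_gt0P; exists y.
have [tS [tS_conn S_rel]] := sub_rel P y0 Pinv (introN (asboolP _) not_x0y0).
have [tU [tU_conn U_rel]] : exists t, {in t, forall p, connected_frack p.1} /\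
    in_rel ((sub_frack (predC P), 1) :: neg_fsum t).
  by apply: (sub_rel _ x0) => [r z | ]; rewrite /= ?Pinv // negbK; apply/asboolP/inn_refl.
exists (tS ++ tU); split; first by move=> p; rewrite mem_cat => /orP [/tS_conn | /tU_conn].
have R_rel := in_rel_generator (invariant_split_generator Rr Pinv).
apply: in_rel_ext (in_rel_cat R_rel (in_rel_cat S_rel U_rel)) _ => R'.
by rewrite !(coef_cat, coef_cons, coef_neg, coef_nil) /=; ring.
Qed.

Lemma fsum_rel_connected s : {in s, forall p, is_frack p.1} ->
  exists t, {in t, forall p, connected_frack p.1} /\ in_rel (s ++ neg_fsum t).
Proof.
elim: s => [_ | [R z] s IH s_rack]; first by exists [::]; split => //; exact: in_rel_nil.
have [ts [ts_conn s_rel]] := IH (fun q qs => s_rack q (predU1r _ _ qs)).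
have [tR [tR_conn R_rel]] := frack_rel_connected (s_rack (R, z) (mem_head _ _)).
exists (scale_fsum z tR ++ ts); split.
  by move=> p; rewrite mem_cat => /orP [/mapP [q /tR_conn ? ->] | /ts_conn].
apply: in_rel_ext (in_rel_cat (in_rel_scale z R_rel) s_rel) _ => R'.
by rewrite /= !(coef_cat, coef_cons, coef_neg, coef_scale, coef_nil) /=; ring.
Qed.

Theorem theorem4p1 :
  (* surjectivity of Z{R_con} -> B(R) *)
  (forall s : fsum, {in s, forall p, is_frack p.1} ->
     exists t : fsum, {in t, forall p, connected_frack p.1} /\
                      in_rel (s ++ neg_fsum t))
  /\
  (* injectivity: a combination of connected racks that vanishes in B(R)
     has zero coefficient on every isomorphism class *)
  (forall t : fsum, {in t, forall p, connected_frack p.1} -> in_rel t ->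
     forall R : frack, connected_frack R ->
       \sum_(p <- t | frack_iso p.1 R) p.2 = 0)
  /\
  (* in particular, B(R) is torsion-free *)
  (forall (s : fsum) (n : nat), {in s, forall p, is_frack p.1} -> (0 < n)%N ->
     in_rel (scale_fsum n%:Z s) -> in_rel s).
Proof.
have rel_class_coef t : {in t, forall p, connected_frack p.1} -> in_rel t ->
    forall R, class_coef t R = 0.
  by move=> t_conn t_rel; apply: class_coef_eq0_marks => // Q Qc; apply: mark_rel.
split; first exact: fsum_rel_connected.
split=> [t t_conn t_rel R _ | s n s_rack n_gt0 ns_rel]; first exact: rel_class_coef.
have [t [t_conn st_rel]] := fsum_rel_connected s_rack.
have nt_rel : in_rel (scale_fsum n%:Z t).
  apply: in_rel_ext (in_rel_cat ns_rel (in_rel_scale (- n%:Z) st_rel)) _ => R.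
  by rewrite !(coef_cat, coef_neg, coef_scale); ring.
have t_rel : in_rel t.
  apply: class_coef_eq0_rel => // R _; apply/eqP.
  have nt_conn : {in scale_fsum n%:Z t, forall p, connected_frack p.1}.
    by move=> p /mapP [q /t_conn ? ->].
  have := rel_class_coef _ nt_conn nt_rel R; rewrite class_coef_scale => /eqP.
  by rewrite mulf_eq0 eqz_nat (gtn_eqF n_gt0).
apply: in_rel_ext (in_rel_cat st_rel t_rel) _ => R.
by rewrite !coef_cat coef_neg; ring.
Qed.
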